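(* For every integer $t\ge 2$ there exists a regular simple graph $\Gamma$ on $2t$ vertices such that $E(\Gamma)=E(\bar\Gamma)$ and $\Gamma$ and $\bar\Gamma$ are not isospectral.
   Context: The energy $E(\Gamma)$ is the sum of the absolute values of the adjacency eigenvalues (with multiplicity); $\bar\Gamma$ is the complement of $\Gamma$; two graphs are isospectral if their adjacency spectra (with multiplicities) coincide. *)

(* eigenvalues computed in algC (algebraically closed). *)
From mathcomp Require Import all_boot all_order all_algebra all_field.
Set Implicit Arguments. Unset Strict Implicit. Unset Printing Implicit Defensive.
Import Order.TTheory GRing.Theory Num.Theory.
Local Open Scope ring_scope.

Definition simple_graph n (e : rel 'I_n) : Prop :=
  (forall u v, e u v = e v u) /\ (forall u, ~~ e u u).

Definition regular n (e : rel 'I_n) : Prop :=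
  exists k : nat, forall v : 'I_n, #|[set w | e v w]| = k.

Definition compl_graph n (e : rel 'I_n) : rel 'I_n :=
  fun u v => (u != v) && ~~ e u v.

Definition adj n (e : rel 'I_n) : 'M[algC]_n := \matrix_(i, j) (e i j)%:R.

Lemma char_poly_split n (A : 'M[algC]_n) :
  exists s : seq algC, char_poly A == \prod_(z <- s) ('X - z%:P).
Proof.
have [s Hs] := closed_field_poly_normal (char_poly A).
by exists s; rewrite {1}Hs (monicP (char_poly_monic A)) scale1r.
Qed.

(* Eigenvalues with multiplicity (roots of the characteristic polynomial). *)
Definition spectrum n (A : 'M[algC]_n) : seq algC := xchoose (char_poly_split A).

Lemma spectrumE n (A : 'M[algC]_n) :
  char_poly A = \prod_(z <- spectrum A) ('X - z%:P).
Proof. exact/eqP/(xchooseP (char_poly_split A)). Qed.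

Definition energy n (e : rel 'I_n) : algC := \sum_(z <- spectrum (adj e)) `|z|.

Definition isospectral n (e f : rel 'I_n) : Prop :=
  perm_eq (spectrum (adj e)) (spectrum (adj f)).

(* The crown graph (K_{t,t} minus a perfect matching) and its complement
   (two copies of K_t joined by a perfect matching) both have adjacency matrices
   of the block form [[P, Q], [Q, P]], whose characteristic polynomial is
   char(P + Q) * char(P - Q), and here P and Q are combinations of the all-ones
   matrix J and the identity.  This gives the spectra
     crown:      t - 1, -(t - 1), (-1)^(t-1), 1^(t-1),
     complement: t, t - 2, 0^(t-1), (-2)^(t-1),
   both of energy 4(t - 1).  For t >= 2 the complement has eigenvalue 0 and the
   crown does not, so the two graphs are not isospectral. *)

From mathcomp Require Import all_boot all_order all_algebra all_field.
From mathcomp Require Import ring.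
Set Implicit Arguments. Unset Strict Implicit. Unset Printing Implicit Defensive.
Import Order.TTheory GRing.Theory Num.Theory.
Local Open Scope ring_scope.

Lemma det_block_circulant (R : comPzRingType) n (A B : 'M[R]_n) :
  \det (block_mx A B B A) = \det (A + B) * \det (A - B).
Proof.
have reduce : block_mx 1%:M 1%:M 0 1%:M *m block_mx A B B A *m block_mx 1%:M (-1%:M) 0 1%:M
              = block_mx (A + B) 0 B (A - B).
  rewrite !mulmx_block !(mul1mx, mulmx1, mul0mx, mulmx0, add0r, addr0, mulmxN).
  by rewrite [B + A]addrC addNr [- B + A]addrC.
move/(congr1 determinant): reduce.
by rewrite !det_mulmx !det_ublock det_lblock !det1 !mul1r mulr1.
Qed.

Lemma mul_const_mx (R : pzSemiRingType) m k p (a b : R) :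
  (const_mx a : 'M_(m, k)) *m (const_mx b : 'M_(k, p)) = const_mx (a * b *+ k).
Proof.
apply/matrixP => i j; rewrite !mxE (eq_bigr (fun _ => a * b)) => [|l _]; last by rewrite !mxE.
by rewrite sumr_const card_ord.
Qed.

Lemma det_scalar_add_const (R : comPzRingType) n (c d : R) :
  \det (c%:M + const_mx d : 'M_n.+1) = (c + n.+1%:R * d) * c ^+ n.
Proof.
change (\det (c%:M + const_mx d : 'M_(1 + n)) = (c + n.+1%:R * d) * c ^+ n).
rewrite -[const_mx d]block_mx_const scalar_mx_block add_block_mx !add0r.
set M := block_mx _ _ _ _.
have reduce :
    block_mx 1%:M 0 (const_mx (-1)) 1%:M *m M *m block_mx 1%:M 0 (const_mx 1) 1%:M
    = block_mx ((c + n.+1%:R * d)%:M : 'M_1) (const_mx d) 0 c%:M.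
  rewrite !mulmx_block !(mul1mx, mulmx1, mul0mx, mulmx0, add0r, addr0, mulmxDl, mulmxDr).
  rewrite ?mul_mx_scalar ?mul_scalar_mx ?scalemx_const ?mul_const_mx.
  congr block_mx; apply/matrixP => i j; rewrite !mxE ?ord1 ?eqxx ?mulr1n ?mulr0n; ring.
move/(congr1 determinant): reduce.
by rewrite !det_mulmx det_ublock !det_lblock !det1 !mul1r mulr1 !det_scalar expr1.
Qed.

Lemma char_poly_block_circulant (R : comNzRingType) n (P Q : 'M[R]_n) :
  char_poly (block_mx P Q Q P) = char_poly (P + Q) * char_poly (P - Q).
Proof.
have blockE : char_poly_mx (block_mx P Q Q P) =
    block_mx (char_poly_mx P) (- map_mx polyC Q) (- map_mx polyC Q) (char_poly_mx P).
  by rewrite /char_poly_mx scalar_mx_block map_block_mx opp_block_mx add_block_mx !add0r.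
rewrite /char_poly blockE det_block_circulant /char_poly_mx.
by rewrite map_mxD map_mxB !opprD opprK !addrA.
Qed.

Lemma char_poly_const_add_scalar (R : comNzRingType) n (a b : R) :
  char_poly (const_mx a + b%:M : 'M_n.+1) =
  ('X - (b + n.+1%:R * a)%:P) * ('X - b%:P) ^+ n.
Proof.
have scalar_constE :
    char_poly_mx (const_mx a + b%:M : 'M_n.+1) = ('X - b%:P)%:M + const_mx (- a%:P).
  apply/matrixP => i j; rewrite !mxE polyCD polyCMn.
  by case: (i == j); rewrite ?mulr1n ?mulr0n; ring.
rewrite /char_poly scalar_constE det_scalar_add_const polyCD polyCM polyC_natr.
by congr (_ * _); ring.
Qed.

Definition block_graph n (e f : rel 'I_n) : rel 'I_(n + n) :=
  fun u v => match split u, split v with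
  | inl a, inl b | inr a, inr b => e a b
  | inl a, inr b | inr a, inl b => f a b
  end.

Section BlockGraph.
Variables (n : nat) (e f : rel 'I_n).

Lemma block_graph_ll a b : block_graph e f (lshift n a) (lshift n b) = e a b.
Proof. by rewrite /block_graph (unsplitK (inl a)) (unsplitK (inl b)). Qed.
Lemma block_graph_lr a b : block_graph e f (lshift n a) (rshift n b) = f a b.
Proof. by rewrite /block_graph (unsplitK (inl a)) (unsplitK (inr b)). Qed.
Lemma block_graph_rl a b : block_graph e f (rshift n a) (lshift n b) = f a b.
Proof. by rewrite /block_graph (unsplitK (inr a)) (unsplitK (inl b)). Qed.
Lemma block_graph_rr a b : block_graph e f (rshift n a) (rshift n b) = e a b.
Proof. by rewrite /block_graph (unsplitK (inr a)) (unsplitK (inr b)). Qed.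

Definition block_graphE :=
  (block_graph_ll, block_graph_lr, block_graph_rl, block_graph_rr).

Lemma adj_block_graph :
  adj (block_graph e f) = block_mx (adj e) (adj f) (adj f) (adj e).
Proof.
apply/matrixP => u v.
case: (split_ordP u) => a ->; case: (split_ordP v) => b ->;
  by rewrite ?(block_mxEul, block_mxEur, block_mxEdl, block_mxEdr) !mxE block_graphE.
Qed.

Lemma block_graph_simple :
  simple_graph e -> (forall a b, f a b = f b a) -> simple_graph (block_graph e f).
Proof.
move=> [e_sym e_irr] f_sym; split.
  move=> u v; case: (split_ordP u) => a ->; case: (split_ordP v) => b ->;
  by rewrite !block_graphE.
by move=> u; case: (split_ordP u) => a ->; rewrite block_graphE.
Qed.

Lemma block_graph_regular : regular e -> regular f -> regular (block_graph e f).
Proof.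
move=> [k e_reg] [l f_reg]; exists (k + l)%N => u.
rewrite -sum1dep_card big_split_ord /=.
case: (split_ordP u) => a ->;
  under eq_bigl => x do rewrite block_graphE;
  under [X in (_ + X)%N]eq_bigl => x do rewrite block_graphE;
  by rewrite !sum1dep_card e_reg f_reg // addnC.
Qed.

End BlockGraph.

Definition crown n : rel 'I_(n + n) := block_graph [rel _ _ | false] [rel a b | a != b].
Arguments crown : clear implicits.

Lemma crown_simple n : simple_graph (crown n).
Proof. by apply: block_graph_simple => // a b /=; rewrite eq_sym. Qed.

Lemma crown_regular n : regular (crown n).
Proof.
apply: block_graph_regular; first by exists 0%N => v; rewrite -sum1dep_card big_pred0.
exists n.-1 => v; rewrite -[in RHS](card_ord n) -(cardsC1 v).
by apply: eq_card => w; rewrite !inE eq_sym.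
Qed.

Lemma adj_compl_graph n (e : rel 'I_n) :
  (forall u, ~~ e u u) -> adj (compl_graph e) = const_mx 1 - 1%:M - adj e.
Proof.
move=> e_irr; apply/matrixP => u v; rewrite !mxE /compl_graph.
have [<-|_] := eqVneq u v; first by rewrite (negbTE (e_irr u)) subrr subr0.
by case: (e u v); rewrite ?subr0 ?subrr.
Qed.

Lemma adj_crown n :
  adj (crown n) = block_mx 0 (const_mx 1 - 1%:M) (const_mx 1 - 1%:M) 0.
Proof.
rewrite adj_block_graph; congr block_mx; apply/matrixP => a b; rewrite !mxE //=;
  by case: (a == b); rewrite ?subrr ?subr0.
Qed.

Lemma adj_compl_crown n :
  adj (compl_graph (crown n)) =
  block_mx (const_mx 1 - 1%:M) 1%:M 1%:M (const_mx 1 - 1%:M).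
Proof.
rewrite adj_compl_graph; last by case: (crown_simple n).
rewrite adj_crown -block_mx_const scalar_mx_block !opp_block_mx !add_block_mx.
by rewrite !subr0 subKr.
Qed.

Lemma spectrum_char_poly n (A : 'M[algC]_n) s :
  char_poly A = \prod_(z <- s) ('X - z%:P) -> perm_eq (spectrum A) s.
Proof. by move=> charA; apply: prod_XsubC_eq; rewrite -spectrumE. Qed.

Lemma spectrum_crown n :
  perm_eq (spectrum (adj (crown n.+1))) (n%:R :: - n%:R :: nseq n (-1) ++ nseq n 1).
Proof.
apply: spectrum_char_poly; rewrite adj_crown char_poly_block_circulant add0r sub0r.
have -> : - (const_mx 1 - 1%:M) = const_mx (-1) + 1%:M :> 'M[algC]_n.+1.
  by apply/matrixP => i j; rewrite !mxE opprB addrC.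
have -> : const_mx 1 - 1%:M = const_mx 1 + (-1)%:M :> 'M[algC]_n.+1.
  by rewrite raddfN.
rewrite !char_poly_const_add_scalar 2!big_cons big_cat !big_nseq !iter_mulr_1 /=.
ring.
Qed.

Lemma spectrum_compl_crown n :
  perm_eq (spectrum (adj (compl_graph (crown n.+2))))
          (n.+2%:R :: n%:R :: nseq n.+1 0 ++ nseq n.+1 (-2)).
Proof.
apply: spectrum_char_poly; rewrite adj_compl_crown char_poly_block_circulant.
have -> : const_mx 1 - 1%:M + 1%:M = const_mx 1 + 0%:M :> 'M[algC]_n.+2.
  by rewrite subrK raddf0 addr0.
have -> : const_mx 1 - 1%:M - 1%:M = const_mx 1 + (-2)%:M :> 'M[algC]_n.+2.
  by apply/matrixP => i j; rewrite !mxE; ring.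
rewrite !char_poly_const_add_scalar 2!big_cons big_cat !big_nseq !iter_mulr_1 /=.
ring.
Qed.

Lemma energy_crown n : energy (crown n.+1) = (4 * n)%:R.
Proof.
rewrite /energy (perm_big _ (spectrum_crown n)).
rewrite 2!big_cons big_cat !big_nseq !iter_addr_0 /=.
rewrite !normrN normr_nat normr1.
ring.
Qed.

Lemma energy_compl_crown n : energy (compl_graph (crown n.+2)) = (4 * n.+1)%:R.
Proof.
rewrite /energy (perm_big _ (spectrum_compl_crown n)).
rewrite 2!big_cons big_cat !big_nseq !iter_addr_0 /=.
rewrite normrN !normr_nat normr0.
ring.
Qed.

Lemma crown_not_isospectral n : ~ isospectral (crown n.+2) (compl_graph (crown n.+2)).
Proof.
rewrite /isospectral (permPl (spectrum_crown n.+1)) (permPr (spectrum_compl_crown n)).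
move=> /perm_mem/(_ 0); rewrite !(inE, mem_cat, mem_nseq) eqxx /= !orbT.
by rewrite !(eq_sym (0 : algC)) !oppr_eq0 pnatr_eq0 oner_eq0 !andbF.
Qed.

Theorem mainTheorem5 (t : nat) (ht : (2 <= t)%N) :
  exists e : rel 'I_(2 * t),
    [/\ simple_graph e, regular e,
        energy e = energy (compl_graph e)
      & ~ isospectral e (compl_graph e)].
Proof.
case: t ht => [|[|n]] // _.
have -> : (2 * n.+2 = n.+2 + n.+2)%N by rewrite mul2n addnn.
exists (crown n.+2); split.
- exact: crown_simple.
- exact: crown_regular.
- by rewrite energy_crown energy_compl_crown.
- exact: crown_not_isospectral.
Qed.
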